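(* Let $P$ be a weighted combinatorial optimization problem and let $(T_S)_{S \in P}$ be the decision trees (with continuous branching functions) of a deterministic algorithm $A$ for $P$. Then for every instance $(S,w)$, $S=(n,W,L,\mathrm{cost})$, there exists a function $h : \mathbb{R} \to Q^n$ with the following properties: - $h(0)=0$ and $h$ is continuous at $0$; - $W$ continues into direction $h$ at $w$; - every branching function of $T_S$ is decreasing, constant, or increasing into direction $h$ at $w$. Consequently, breaking every tie $v_u(w)=0$ by taking the left child iff $v_u$ is decreasing into direction $h$ at $w$ defines a tie-breaking policy under which $A$ uses symbolic perturbation. That is, every deterministic algorithm admits a symbolic perturbation tie-breaking policy.
   Context: Let $Q$ be a subfield of $\mathbb{R}$ (e.g. $\mathbb{R}$, $\mathbb{Q}$, or the real algebraic numbers). Equip $Q^n$ with the Euclidean metric $d$. For $x \in Q^n$ and $\epsilon>0$, the $\epsilon$-neighborhood of $x$ is $\{y \in Q^n \mid d(x,y)<\epsilon\}$. A neighborhood of $x$ is an $\epsilon$-neighborhood of $x$ for some $\epsilon>0$. A set $U \subseteq Q^n$ is open if it contains a neighborhood of each of its points. A set $X \subseteq Q^n$ is semi-open if for every $x \in X$ and every neighborhood $N$ of $x$ there is a non-empty open set $U \subseteq Q^n$ with $U \subseteq N \cap X$. For $x \in \mathbb{R}$, $\mathrm{sgn}(x) = x/|x|$ if $x \neq 0$ and $\mathrm{sgn}(0)=0$. Problems: A weighted combinatorial optimization (minimization) problem $P$ is a set of problem structures; each structure $S=(n,W,L,\mathrm{cost})$ consists of a positive integer $n$, a semi-open set $W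 \subseteq Q^n$ of admissible weight vectors, a finite non-empty set $L$ of feasible solutions, and a function $\mathrm{cost} : W \times L \to \mathbb{R}$ such that $\mathrm{cost}(\cdot,l)$ is continuous on $W$ for every $l \in L$. An instance is a pair $(S,w)$ with $S \in P$ and $w \in W$. Algorithms: A deterministic algorithm $A$ for $P$ assigns to each structure $S=(n,W,L,\mathrm{cost}) \in P$ a finite rooted binary decision tree $T_S$. Each leaf is labelled with an element of $L \cup \{l_f\}$, where $l_f \notin L$ is a special symbol representing failure. Each internal node $u$ is labelled with a continuous branching function $v_u : W \to Q$. On input $(S,w)$, $A$ starts at the root of $T_S$. At an internal node $u$ it moves to the left child if $v_u(w)<0$ and to the right child if $v_u(w)>0$. If $v_u(w)=0$ (a tie), it moves to the left or right child according to a deterministic tie-breaking policy, i.e. a rule fixing, for every instance $(S,w)$ and every internal node $u$ with $v_u(w)=0$, which child is taken. $A$ returns the label $A(S,w)$ of the leaf reached. Directions: Let $W \subseteq Q^n$ be semi-open, $w \in W$, and $h : \mathbb{R} \to Q^n$ with $h(0)=0$ and $h$ continuous at $0$. $W$ continues into direction $h$ at $w$ if there is $\delta>0$ such that for every $0<a<\delta$ some neighborhood of $w+h(a)$ is contained in $W$. If $W$ continues into direction $h$ at $w$ and $f : W \to Q$ is continuous, then $f$ is increasing (resp. constant, decreasing) into direction $h$ at $w$ if the following holds: there is $\delta>0$ such that for every $0<a<\delta$ there is a neighborhood $N_a \subseteq W$ of $w+h(a)$ with $\mathrm{sgn}(f(y)-f(w)) = 1$ (resp. $0$, $-1$) for all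 $y \in N_a$. Symbolic perturbation: $A$ uses symbolic perturbation if, for every instance $(S,w)$ with $S=(n,W,L,\mathrm{cost})$, there exists a function $h_{S,w} : \mathbb{R} \to Q^n$ satisfying all of the following: - $h_{S,w}(0)=0$ and $h_{S,w}$ is continuous at $0$; - $W$ continues into direction $h_{S,w}$ at $w$; - every branching function of $T_S$ is decreasing, constant, or increasing into direction $h_{S,w}$ at $w$; - whenever a tie $v_u(w)=0$ occurs at an internal node $u$ on input $(S,w)$, $A$ takes the left child if $v_u$ is decreasing into direction $h_{S,w}$ at $w$, and the right child otherwise. *)

From Stdlib Require Import Reals List.
Import ListNotations.
Open Scope R_scope.

Set Implicit Arguments.

(* Points of R^n are encoded as functions nat -> R that vanish from index n on. *)
Definition pt := nat -> R.

Definition is_subfield (Q : R -> Prop) : Prop :=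
  Q 0 /\ Q 1 /\
  (forall x y, Q x -> Q y -> Q (x + y)) /\
  (forall x, Q x -> Q (- x)) /\
  (forall x y, Q x -> Q y -> Q (x * y)) /\
  (forall x, Q x -> x <> 0 -> Q (/ x)).

Definition inQn (Q : R -> Prop) (n : nat) (x : pt) : Prop :=
  (forall i, (i < n)%nat -> Q (x i)) /\ (forall i, (n <= i)%nat -> x i = 0).

Fixpoint sumsq (n : nat) (x y : pt) : R :=
  match n with
  | O => 0
  | S k => sumsq k x y + (x k - y k) ^ 2
  end.

Definition dist (n : nat) (x y : pt) : R := sqrt (sumsq n x y).

Definition vadd (x y : pt) : pt := fun i => x i + y i.
Definition vzero : pt := fun _ => 0.

Definition nbhd (Q : R -> Prop) (n : nat) (x : pt) (eps : R) (y : pt) : Prop :=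
  inQn Q n y /\ dist n x y < eps.

Definition subsetQn (Q : R -> Prop) (n : nat) (U : pt -> Prop) : Prop :=
  forall x, U x -> inQn Q n x.

Definition is_open (Q : R -> Prop) (n : nat) (U : pt -> Prop) : Prop :=
  subsetQn Q n U /\
  forall x, U x -> exists eps, 0 < eps /\ forall y, nbhd Q n x eps y -> U y.

Definition semi_open (Q : R -> Prop) (n : nat) (X : pt -> Prop) : Prop :=
  subsetQn Q n X /\
  forall x, X x -> forall eps, 0 < eps ->
    exists U : pt -> Prop, is_open Q n U /\ (exists y, U y) /\
      forall y, U y -> nbhd Q n x eps y /\ X y.

Definition cont_on (n : nat) (W : pt -> Prop) (f : pt -> R) : Prop :=
  forall x, W x -> forall e, 0 < e -> exists d, 0 < d /\
    forall y, W y -> dist n x y < d -> Rabs (f y - f x) < e.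

Definition cont_to_Q (Q : R -> Prop) (n : nat) (W : pt -> Prop) (f : pt -> R) : Prop :=
  cont_on n W f /\ forall x, W x -> Q (f x).

Definition sgn (x : R) : R :=
  match Rlt_dec x 0 with
  | left _ => -1
  | right _ => match Rlt_dec 0 x with left _ => 1 | right _ => 0 end
  end.

Definition good_dir (Q : R -> Prop) (n : nat) (h : R -> pt) : Prop :=
  (forall a, inQn Q n (h a)) /\
  h 0 = vzero /\
  (forall e, 0 < e -> exists d, 0 < d /\
     forall a, Rabs a < d -> dist n (h a) (h 0) < e).

Definition continues (Q : R -> Prop) (n : nat) (W : pt -> Prop) (h : R -> pt) (w : pt) : Prop :=
  exists delta, 0 < delta /\ forall a, 0 < a < delta ->
    exists eps, 0 < eps /\ forall y, nbhd Q n (vadd w (h a)) eps y -> W y.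

Definition dir_sign (Q : R -> Prop) (n : nat) (W : pt -> Prop) (f : pt -> R)
    (h : R -> pt) (w : pt) (s : R) : Prop :=
  exists delta, 0 < delta /\ forall a, 0 < a < delta ->
    exists eps, 0 < eps /\
      (forall y, nbhd Q n (vadd w (h a)) eps y -> W y) /\
      (forall y, nbhd Q n (vadd w (h a)) eps y -> sgn (f y - f w) = s).

Definition increasing_dir Q n W f h w := dir_sign Q n W f h w 1.
Definition constant_dir Q n W f h w := dir_sign Q n W f h w 0.
Definition decreasing_dir Q n W f h w := dir_sign Q n W f h w (-1).

Record structure := Struct {
  s_n : nat;
  s_W : pt -> Prop;
  s_L : Type;
  s_cost : pt -> s_L -> R
}.

Definition finite_nonempty (L : Type) : Prop :=
  exists l : list L, l <> [] /\ forall x : L, In x l.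

Definition valid_structure (Q : R -> Prop) (S : structure) : Prop :=
  (0 < s_n S)%nat /\ semi_open Q (s_n S) (s_W S) /\ finite_nonempty (s_L S) /\
  forall l, cont_on (s_n S) (s_W S) (fun w => s_cost S w l).

Definition problem := structure -> Prop.

(* Finite rooted binary decision trees; leaves labelled by option L
   (None is the failure symbol l_f). *)
Inductive tree (L : Type) : Type :=
| Leaf : option L -> tree L
| Node : (pt -> R) -> tree L -> tree L -> tree L.
Arguments Leaf {L} _.
Arguments Node {L} _ _ _.

(* Nodes are addressed by their path from the root (true = left child). *)
Fixpoint subtree {L} (t : tree L) (p : list bool) : option (tree L) :=
  match p with
  | [] => Some t
  | b :: p' => match t with
               | Leaf _ => None
               | Node _ l r => subtree (if b then l else r) p'
               end
  end.

Definition branch_at {L} (t : tree L) (p : list bool) (v : pt -> R) : Prop :=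
  exists l r, subtree t p = Some (Node v l r).

(* Direction taken at a node with branching function v: true = left.
   tie is the tie-breaking choice at that node. *)
Definition step (v : pt -> R) (w : pt) (tie : bool) : bool :=
  match Rlt_dec (v w) 0 with
  | left _ => true
  | right _ => match Rlt_dec 0 (v w) with left _ => false | right _ => tie end
  end.

(* [follows t w tb pre p]: starting at node pre, the run on input w with
   tie-breaking choices tb (indexed by node paths) takes the path p. *)
Fixpoint follows {L} (t : tree L) (w : pt) (tb : list bool -> bool)
    (pre : list bool) (p : list bool) : Prop :=
  match p with
  | [] => True
  | b :: p' => match t with
               | Leaf _ => False
               | Node v l r => step v w (tb pre) = b /\
                               follows (if b then l else r) w tb (pre ++ [b]) p'
               end
  end.

Definition reached {L} (t : tree L) (w : pt) (tb : list bool -> bool) (p : list bool) : Prop :=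
  follows t w tb [] p.

Definition algorithm := forall S : structure, tree (s_L S).

Definition valid_algorithm (Q : R -> Prop) (P : problem) (A : algorithm) : Prop :=
  forall S, P S -> forall p v, branch_at (A S) p v -> cont_to_Q Q (s_n S) (s_W S) v.

(* A deterministic tie-breaking policy: for each instance (S, w) and each
   internal node (path) which child to take on a tie (true = left). *)
Definition tie_policy := forall S : structure, pt -> list bool -> bool.

Definition uses_symbolic_perturbation (Q : R -> Prop) (P : problem) (A : algorithm)
    (tb : tie_policy) : Prop :=
  forall S, P S -> forall w, s_W S w ->
    exists h : R -> pt,
      good_dir Q (s_n S) h /\
      continues Q (s_n S) (s_W S) h w /\
      (forall p v, branch_at (A S) p v ->
         decreasing_dir Q (s_n S) (s_W S) v h w \/
         constant_dir Q (s_n S) (s_W S) v h w \/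
         increasing_dir Q (s_n S) (s_W S) v h w) /\
      (forall p v, branch_at (A S) p v -> reached (A S) w (tb S w) p -> v w = 0 ->
         (tb S w p = true <-> decreasing_dir Q (s_n S) (s_W S) v h w)).

(* Fix an instance (S, w).  The tree T_S has finitely many branching functions
   f_1, ..., f_k, each continuous on the semi-open set W.  The key fact is:

     there is a sign pattern sig : f_i |-> {-1, 0, 1} such that for every
     eps > 0 some non-empty open set U, contained in W and in the eps-ball
     around w, has sgn (f_i y - f_i w) = sig f_i for all y in U and all i.

   Semi-openness of W
   gives the patches for the empty list.  For one more function f, any patch
   can be shrunk to a smaller non-empty open set on which the sign of
   f - f w is constant (continuity away from the level f w); as patches only
   get easier for larger eps, a pigeonhole over the three signs makes one
   sign work for every eps.  Choosing, for each a > 0, the centre c_a of a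
   ball inside a patch of radius a, the direction h a := c_a - w tends to 0
   and every f_i has constant sign sig f_i near w + h a.  Finally, choosing
   such an h for every instance and breaking a tie at node u leftwards iff
   v_u is decreasing into h gives the tie-breaking policy. *)

From Stdlib Require Import Reals List Lra Classical ClassicalEpsilon.
Import ListNotations.
Open Scope R_scope.

Lemma sumsq_ext n x y x' y' :
  (forall k, (x k - y k) ^ 2 = (x' k - y' k) ^ 2) -> sumsq n x y = sumsq n x' y'.
Proof.
  intros Hxy; induction n as [|n IH]; [reflexivity|].
  change (sumsq n x y + (x n - y n) ^ 2 = sumsq n x' y' + (x' n - y' n) ^ 2).
  now rewrite IH, Hxy.
Qed.

Lemma dist_ext n x y x' y' :
  (forall k, (x k - y k) ^ 2 = (x' k - y' k) ^ 2) -> dist n x y = dist n x' y'.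
Proof. intros Hxy; unfold dist; now rewrite (sumsq_ext n x y x' y' Hxy). Qed.

Lemma dist_self n x : dist n x x = 0.
Proof.
  unfold dist; replace (sumsq n x x) with 0; [apply sqrt_0|].
  induction n as [|n IH]; simpl; [reflexivity|]. rewrite <- IH; ring.
Qed.

Definition signs : list R := [-1; 0; 1].

Lemma sgn_in_signs x : In (sgn x) signs.
Proof.
  unfold sgn, signs; simpl.
  destruct (Rlt_dec x 0); [|destruct (Rlt_dec 0 x)]; auto.
Qed.

Lemma sgn_zero x : sgn x = 0 <-> x = 0.
Proof. unfold sgn; destruct (Rlt_dec x 0); [|destruct (Rlt_dec 0 x)]; split; lra. Qed.

Lemma sgn_close a b : Rabs (b - a) < Rabs a -> sgn b = sgn a.
Proof.
  unfold Rabs; destruct (Rcase_abs (b - a)), (Rcase_abs a); intros Hba;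
  unfold sgn; destruct (Rlt_dec a 0), (Rlt_dec b 0), (Rlt_dec 0 a), (Rlt_dec 0 b);
  lra.
Qed.

Lemma monotone_pigeonhole {A : Type} (P : A -> R -> Prop) (cs : list A) :
  (forall s e e', P s e -> e <= e' -> P s e') ->
  (forall e, 0 < e -> exists s, In s cs /\ P s e) ->
  exists s, In s cs /\ forall e, 0 < e -> P s e.
Proof.
  revert P; induction cs as [|c cs IH]; intros P Hmono Hcover.
  - destruct (Hcover 1 Rlt_0_1) as [s [[] _]].
  - destruct (classic (forall e, 0 < e -> P c e)) as [Hc|Hc]; [exists c; simpl; auto|].
    apply not_all_ex_not in Hc as [e0 Hc]; apply imply_to_and in Hc as [He0 Hc].
    destruct (IH (fun s e => P s (Rmin e e0))) as [s [Hs HPs]].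
    + intros s e e' HP Hle. apply (Hmono s (Rmin e e0)); auto.
      apply Rle_min_compat_r; exact Hle.
    + intros e He.
      destruct (Hcover (Rmin e e0) (Rmin_pos _ _ He He0)) as [s [[<-|Hs] HPs]].
      * exfalso; apply Hc, (Hmono c (Rmin e e0)); auto using Rmin_r.
      * now exists s.
    + exists s; split; [now right|].
      intros e He. apply (Hmono s (Rmin e e0)); auto using Rmin_l.
Qed.

Section SignPatches.

Variables (Q : R -> Prop) (n : nat) (W : pt -> Prop) (w : pt).

Lemma sign_locally_constant (f : pt -> R) c y :
  cont_on n W f -> W y -> f y <> c ->
  exists d, 0 < d /\ forall z, W z -> dist n y z < d -> sgn (f z - c) = sgn (f y - c).
Proof.
  intros Hf Hy Hne.
  assert (Hpos : 0 < Rabs (f y - c)) by (apply Rabs_pos_lt; lra).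
  destruct (Hf y Hy _ Hpos) as [d [Hd Hcd]].
  exists d; split; [exact Hd|]. intros z Hz Hyz. apply sgn_close.
  replace (f z - c - (f y - c)) with (f z - f y) by ring. auto.
Qed.

Lemma sign_refine (U : pt -> Prop) (f : pt -> R) :
  is_open Q n U -> (exists y, U y) -> (forall y, U y -> W y) -> cont_on n W f ->
  exists s U', is_open Q n U' /\ (exists y, U' y) /\ (forall y, U' y -> U y) /\
    (forall y, U' y -> sgn (f y - f w) = s).
Proof.
  intros [HUQ HUopen] HUne HUW Hf.
  destruct (classic (exists y, U y /\ f y <> f w)) as [[y0 [Hy0 Hne]] | Hlevel].
  - exists (sgn (f y0 - f w)), (fun y => U y /\ sgn (f y - f w) = sgn (f y0 - f w)).
    split; [|split; [now exists y0|split; intros y Hy; apply Hy]].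
    split; [intros y [Hy _]; auto|].
    intros y [Hy Hs].
    assert (Hfy : f y <> f w).
    { intro E. apply Hne, Rminus_diag_uniq, sgn_zero. rewrite <- Hs.
      apply sgn_zero; lra. }
    destruct (HUopen y Hy) as [e [He HeU]].
    destruct (sign_locally_constant f (f w) y Hf (HUW y Hy) Hfy) as [d [Hd Hsd]].
    exists (Rmin e d); split; [now apply Rmin_pos|].
    intros z [HzQ Hz].
    assert (HUz : U z) by (apply HeU; split; [|eapply Rlt_le_trans; [|apply Rmin_l]]; eauto).
    split; [exact HUz|]. rewrite <- Hs. apply Hsd; [auto|].
    eapply Rlt_le_trans; [exact Hz|apply Rmin_r].
  - exists 0, U. split; [split; auto|split; [exact HUne|split; [auto|]]].
    intros y Hy. apply sgn_zero.
    destruct (Req_dec (f y) (f w)) as [E|E]; [lra|].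
    exfalso; apply Hlevel; eauto.
Qed.

Definition sign_patch (fs : list (pt -> R)) (sig : (pt -> R) -> R) eps (U : pt -> Prop) :=
  is_open Q n U /\ (exists y, U y) /\ (forall y, U y -> W y /\ dist n w y < eps) /\
  (forall f, In f fs -> forall y, U y -> sgn (f y - f w) = sig f).

Lemma sign_patch_mono fs sig e e' U :
  sign_patch fs sig e U -> e <= e' -> sign_patch fs sig e' U.
Proof.
  intros [HUo [HUne [HUW HUs]]] Hle.
  split; [exact HUo|split; [exact HUne|split; [|exact HUs]]].
  intros y Hy; destruct (HUW y Hy) as [HWy Hd]; split; [exact HWy|lra].
Qed.

Lemma sign_pattern_exists (fs : list (pt -> R)) :
  semi_open Q n W -> W w -> (forall f, In f fs -> cont_on n W f) ->
  exists sig, forall eps, 0 < eps -> exists U, sign_patch fs sig eps U.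
Proof.
  intros [_ HWsemi] Hw. induction fs as [|f fs IH]; intros Hcont.
  - exists (fun _ => 0). intros eps Heps.
    destruct (HWsemi w Hw eps Heps) as [U [HU [Hne HUW]]].
    exists U; split; [exact HU|split; [exact Hne|split; [|intros ? []]]].
    intros y Hy; destruct (HUW y Hy) as [[_ Hd] HWy]; auto.
  - destruct IH as [sig Hsig]; [intros g Hg; apply Hcont; now right|].
    destruct (monotone_pigeonhole
                (fun s eps => exists U, sign_patch fs sig eps U /\
                                        forall y, U y -> sgn (f y - f w) = s) signs)
      as [s [_ Hs]].
    + intros s e e' [U [HU HUf]] Hle.
      exists U; split; [exact (sign_patch_mono _ _ _ _ _ HU Hle)|exact HUf].
    + intros eps Heps. destruct (Hsig eps Heps) as [U [HUo [HUne [HUW HUs]]]].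
      destruct (sign_refine U f HUo HUne (fun y Hy => proj1 (HUW y Hy))
                  (Hcont f (or_introl eq_refl))) as [s [U' [HU'o [[y Hy] [HU'U HU's]]]]].
      exists s; split; [rewrite <- (HU's y Hy); apply sgn_in_signs|].
      exists U'; split; [|exact HU's].
      split; [exact HU'o|split; [now exists y|split]].
      * intros z Hz; apply HUW, HU'U, Hz.
      * intros g Hg z Hz; apply HUs, HU'U; auto.
    + exists (fun g => if excluded_middle_informative (g = f) then s else sig g).
      intros eps Heps. destruct (Hs eps Heps) as [U [[HUo [HUne [HUW HUs]]] HUf]].
      exists U; split; [exact HUo|split; [exact HUne|split; [exact HUW|]]].
      intros g Hg y Hy. destruct (excluded_middle_informative (g = f)) as [->|Hgf]; auto.
      destruct Hg as [<-|Hg]; [congruence|auto].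
Qed.

Lemma patch_balls fs sig :
  (forall eps, 0 < eps -> exists U, sign_patch fs sig eps U) ->
  exists (c : R -> pt) (r : R -> R), forall a, 0 < a ->
    inQn Q n (c a) /\ 0 < r a /\ dist n w (c a) < a /\
    (forall y, nbhd Q n (c a) (r a) y ->
       W y /\ forall f, In f fs -> sgn (f y - f w) = sig f).
Proof.
  intros Hpatch.
  assert (Hball : forall a, exists cr : pt * R, 0 < a ->
     inQn Q n (fst cr) /\ 0 < snd cr /\ dist n w (fst cr) < a /\
     (forall y, nbhd Q n (fst cr) (snd cr) y ->
        W y /\ forall f, In f fs -> sgn (f y - f w) = sig f)).
  { intro a. destruct (Rlt_dec 0 a) as [Ha|Ha]; [|exists (w, 1); intro; lra].
    destruct (Hpatch a Ha) as [U [[HUQ HUopen] [[y Hy] [HUW HUs]]]].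
    destruct (HUopen y Hy) as [e [He HeU]].
    exists (y, e); intros _; simpl.
    split; [now apply HUQ|split; [exact He|split; [apply HUW, Hy|]]].
    intros z Hz. specialize (HeU z Hz).
    split; [apply HUW, HeU|intros f Hf; apply HUs; auto]. }
  destruct (choice _ Hball) as [F HF].
  exists (fun a => fst (F a)), (fun a => snd (F a)). exact HF.
Qed.

Lemma direction_from_patches fs sig :
  is_subfield Q -> inQn Q n w ->
  (forall eps, 0 < eps -> exists U, sign_patch fs sig eps U) ->
  exists h, good_dir Q n h /\ continues Q n W h w /\
    forall f, In f fs -> dir_sign Q n W f h w (sig f).
Proof.
  intros [Q0 [_ [Qadd [Qopp _]]]] [HwQ HwZ] Hpatch.
  destruct (patch_balls fs sig Hpatch) as [c [r Hcr]].
  set (h := fun a => if Rlt_dec 0 a then (fun i => c a i - w i) else vzero).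
  assert (Hh0 : h 0 = vzero) by (unfold h; destruct (Rlt_dec 0 0); [lra|reflexivity]).
  assert (Hshift : forall a eps y, 0 < a ->
            nbhd Q n (vadd w (h a)) eps y -> nbhd Q n (c a) eps y).
  { intros a eps y Ha. unfold h; destruct (Rlt_dec 0 a); [|lra]. unfold nbhd.
    rewrite (dist_ext n (vadd w (fun i => c a i - w i)) y (c a) y); [auto|].
    intro k; unfold vadd; ring. }
  assert (Hnear : forall a y, 0 < a -> nbhd Q n (vadd w (h a)) (r a) y ->
            W y /\ forall f, In f fs -> sgn (f y - f w) = sig f).
  { intros a y Ha Hy. apply (Hcr a Ha), Hshift; auto. }
  exists h; split; [split; [|split; [exact Hh0|]]|split].
  - intro a. unfold h. destruct (Rlt_dec 0 a) as [Ha|Ha].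
    + destruct (Hcr a Ha) as [[HcQ HcZ] _]. split.
      * intros i Hi. apply Qadd, Qopp; auto.
      * intros i Hi. rewrite HcZ, HwZ by exact Hi. ring.
    + split; intros i Hi; unfold vzero; auto.
  - intros e He. exists e; split; [exact He|]. intros a Ha. rewrite Hh0.
    unfold h. destruct (Rlt_dec 0 a) as [Hpos|Hpos].
    + destruct (Hcr a Hpos) as [_ [_ [Hd _]]].
      rewrite (dist_ext n _ vzero w (c a)) by (intro k; unfold vzero; ring).
      rewrite Rabs_right in Ha by lra. lra.
    + now rewrite dist_self.
  - exists 1; split; [lra|]. intros a [Ha _].
    exists (r a); split; [apply (Hcr a Ha)|]. intros y Hy. apply (Hnear a y Ha Hy).
  - intros f Hf. exists 1; split; [lra|]. intros a [Ha _].
    exists (r a); split; [apply (Hcr a Ha)|].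
    split; intros y Hy; apply (Hnear a y Ha Hy); auto.
Qed.

End SignPatches.

Lemma common_perturbation_direction Q n (W : pt -> Prop) w (fs : list (pt -> R)) :
  is_subfield Q -> semi_open Q n W -> W w -> (forall f, In f fs -> cont_on n W f) ->
  exists h, good_dir Q n h /\ continues Q n W h w /\
    (forall f, In f fs -> decreasing_dir Q n W f h w \/ constant_dir Q n W f h w \/
                          increasing_dir Q n W f h w).
Proof.
  intros HQ HW Hw Hcont.
  destruct (sign_pattern_exists Q n W w fs HW Hw Hcont) as [sig Hsig].
  destruct (direction_from_patches Q n W w fs sig HQ (proj1 HW w Hw) Hsig)
    as [h [Hgood [Hcontinues Hdir]]].
  exists h; split; [exact Hgood|split; [exact Hcontinues|]].
  intros f Hf.
  assert (Hsign : In (sig f) signs).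
  { destruct (Hsig 1 Rlt_0_1) as [U [_ [[y Hy] [_ HUs]]]].
    rewrite <- (HUs f Hf y Hy). apply sgn_in_signs. }
  pose proof (Hdir f Hf) as Hf_dir.
  unfold decreasing_dir, constant_dir, increasing_dir.
  destruct Hsign as [E|[E|[E|[]]]]; rewrite <- E in Hf_dir; auto.
Qed.

Fixpoint branch_functions {L} (t : tree L) : list (pt -> R) :=
  match t with
  | Leaf _ => []
  | Node v l r => v :: branch_functions l ++ branch_functions r
  end.

Lemma branch_functions_sound {L} (t : tree L) p v :
  branch_at t p v -> In v (branch_functions t).
Proof.
  unfold branch_at. revert t; induction p as [|b p IH]; intros t [l [r Hsub]];
    destruct t as [o|v' l' r']; simpl in Hsub; try discriminate.
  - injection Hsub as <- <- <-. now left.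
  - right. apply in_or_app. destruct b; [left|right]; apply IH; eauto.
Qed.

Lemma branch_functions_complete {L} (t : tree L) v :
  In v (branch_functions t) -> exists p, branch_at t p v.
Proof.
  induction t as [o|v' l IHl r IHr]; simpl; [intros []|].
  intros [<-|Hv]; [exists [], l, r; reflexivity|].
  apply in_app_or in Hv as [Hv|Hv].
  - destruct (IHl Hv) as [p Hp]. now exists (true :: p).
  - destruct (IHr Hv) as [p Hp]. now exists (false :: p).
Qed.

Lemma branch_at_unique {L} (t : tree L) p v v' :
  branch_at t p v -> branch_at t p v' -> v = v'.
Proof. intros [l [r E]] [l' [r' E']]. rewrite E in E'. now injection E'. Qed.

Definition perturbation_direction (Q : R -> Prop) (S : structure) (t : tree (s_L S))
    (w : pt) (h : R -> pt) : Prop :=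
  good_dir Q (s_n S) h /\
  continues Q (s_n S) (s_W S) h w /\
  (forall p v, branch_at t p v ->
     decreasing_dir Q (s_n S) (s_W S) v h w \/
     constant_dir Q (s_n S) (s_W S) v h w \/
     increasing_dir Q (s_n S) (s_W S) v h w).

Lemma instance_direction Q (P : problem) (A : algorithm) :
  is_subfield Q -> (forall S, P S -> valid_structure Q S) -> valid_algorithm Q P A ->
  forall S, P S -> forall w, s_W S w -> exists h, perturbation_direction Q S (A S) w h.
Proof.
  intros HQ HP HA S HS w Hw.
  destruct (common_perturbation_direction Q (s_n S) (s_W S) w (branch_functions (A S)) HQ
              (proj1 (proj2 (HP S HS))) Hw) as [h [Hgood [Hcontinues Hdir]]].
  - intros f Hf. destruct (branch_functions_complete _ _ Hf) as [p Hp].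
    exact (proj1 (HA S HS p f Hp)).
  - exists h; split; [exact Hgood|split; [exact Hcontinues|]].
    intros p v Hp. apply Hdir, (branch_functions_sound _ p), Hp.
Qed.

Lemma choose_directions Q (P : problem) (A : algorithm) :
  (forall S, P S -> forall w, s_W S w -> exists h, perturbation_direction Q S (A S) w h) ->
  exists H : structure -> pt -> R -> pt,
    forall S, P S -> forall w, s_W S w -> perturbation_direction Q S (A S) w (H S w).
Proof.
  intros Hdir.
  apply (choice (fun S (HS : pt -> R -> pt) => P S -> forall w,
           s_W S w -> perturbation_direction Q S (A S) w (HS w))).
  intro S. destruct (classic (P S)) as [HS|HnS]; [|exists (fun _ _ => vzero); tauto].
  destruct (choice (fun w h => s_W S w -> perturbation_direction Q S (A S) w h))
    as [HS_dir Hspec]; [|exists HS_dir; auto].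
  intro w. destruct (classic (s_W S w)) as [Hw|Hnw]; [|exists (fun _ => vzero); tauto].
  destruct (Hdir S HS w Hw) as [h Hh]. now exists h.
Qed.

Definition decreasing_policy (Q : R -> Prop) (A : algorithm)
    (H : structure -> pt -> R -> pt) : tie_policy :=
  fun S w p =>
    if excluded_middle_informative
         (exists v, branch_at (A S) p v /\ decreasing_dir Q (s_n S) (s_W S) v (H S w) w)
    then true else false.

Lemma decreasing_policy_symbolic Q (P : problem) (A : algorithm) H :
  (forall S, P S -> forall w, s_W S w -> perturbation_direction Q S (A S) w (H S w)) ->
  uses_symbolic_perturbation Q P A (decreasing_policy Q A H).
Proof.
  intros Hdir S HS w Hw. exists (H S w).
  destruct (Hdir S HS w Hw) as [Hgood [Hcontinues Htri]].
  split; [exact Hgood|split; [exact Hcontinues|split; [exact Htri|]]].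
  intros p v Hp _ _. unfold decreasing_policy.
  destruct excluded_middle_informative as [[v' [Hp' Hdec]]|Hnot]; split; intro Hleft.
  - now rewrite (branch_at_unique _ _ _ _ Hp Hp').
  - reflexivity.
  - discriminate.
  - exfalso; apply Hnot; eauto.
Qed.

Theorem theorem3 (Q : R -> Prop) (HQ : is_subfield Q)
    (P : problem) (HP : forall S, P S -> valid_structure Q S)
    (A : algorithm) (HA : valid_algorithm Q P A) :
  (forall S, P S -> forall w, s_W S w ->
     exists h : R -> pt,
       good_dir Q (s_n S) h /\
       continues Q (s_n S) (s_W S) h w /\
       (forall p v, branch_at (A S) p v ->
          decreasing_dir Q (s_n S) (s_W S) v h w \/
          constant_dir Q (s_n S) (s_W S) v h w \/
          increasing_dir Q (s_n S) (s_W S) v h w)) /\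
  exists tb : tie_policy, uses_symbolic_perturbation Q P A tb.
Proof.
  pose proof (instance_direction Q P A HQ HP HA) as Hdir.
  split; [exact Hdir|].
  destruct (choose_directions Q P A Hdir) as [H HH].
  exists (decreasing_policy Q A H). exact (decreasing_policy_symbolic Q P A H HH).
Qed.
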